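(* Let $V$ be a commutative unital quantale whose underlying lattice is a frame and in which $k=\top$. Let $(X,a)$, $(Y,b)$ be $V$-groups, $\varphi\colon Y\to\mathrm{Aut}(X)$ a group action, and $c$ a $V$-category structure on the semidirect product group $X\rtimes_\varphi Y$ such that \[(X,a)\xrightarrow{\langle 1,0\rangle}(X\rtimes_\varphi Y,c)\underset{\langle 0,1\rangle}{\overset{\pi_2}{\rightleftarrows}}(Y,b)\] is a split extension in $\mathsf{VGrp}$. Then for every $y\in Y$ the map $\varphi_y\colon(X,a)\to(X,a)$ is a $V$-functor.
   Context: A commutative unital quantale $V$ is a complete lattice with a commutative associative operation $\otimes$ with unit $k$ preserving arbitrary joins in each variable. A $V$-category $(X,a)$: $a\colon X\times X\to V$ with $k\le a(x,x)$ and $a(x,x')\otimes a(x',x'')\le a(x,x'')$; a $V$-functor is a map $f$ with $a(x,x')\le b(f(x),f(x'))$. A $V$-group $(X,a,+)$ is a $V$-category with a group structure (additive, not necessarily abelian) such that $a(x_1,x_2)\otimes a(x_1',x_2')\le a(x_1+x_1',x_2+x_2')$; $V$-homomorphisms are group homomorphisms that are $V$-functors; category $\mathsf{VGrp}$ (pointed since $k=\top$). The semidirect product $X\rtimes_\varphi Y$ is $X\times Y$ with $(x,y)+(x',y')=(x+\varphi_y(x'),y+y')$, where $\varphi_y=\varphi(y)$; $\langle 1,0\rangle(x)=(x,0)$, $\langle 0,1\rangle(y)=(0,y)$, $\pi_2(x,y)=y$. The diagram being a split extension in $\mathsf{VGrp}$ means: all three maps are $V$-homomorphisms, $\pi_2\circ\langle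 0,1\rangle=1_Y$, and $\langle 1,0\rangle$ is a kernel of $\pi_2$ in $\mathsf{VGrp}$ (equivalently, additionally $a(x,x')=c((x,0),(x',0))$ for all $x,x'\in X$). *)

Set Implicit Arguments.

(** Commutative unital quantale: complete lattice (order + arbitrary sups),
    commutative associative tensor with unit [qk], preserving arbitrary
    joins (in the second variable; by commutativity in both). *)
Record quantale := Quantale {
  qcar :> Type;
  qle : qcar -> qcar -> Prop;
  qsup : (qcar -> Prop) -> qcar;
  qten : qcar -> qcar -> qcar;
  qk : qcar;
  qle_refl : forall u, qle u u;
  qle_trans : forall u v w, qle u v -> qle v w -> qle u w;
  qle_antisym : forall u v, qle u v -> qle v u -> u = v;
  qsup_ub : forall (S : qcar -> Prop) v, S v -> qle v (qsup S);
  qsup_least : forall (S : qcar -> Prop) u,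
      (forall v, S v -> qle v u) -> qle (qsup S) u;
  qten_assoc : forall u v w, qten u (qten v w) = qten (qten u v) w;
  qten_comm : forall u v, qten u v = qten v u;
  qten_unit : forall u, qten qk u = u;
  qten_sup : forall u (S : qcar -> Prop),
      qten u (qsup S) = qsup (fun w => exists s, S s /\ w = qten u s)
}.

Arguments qle {q}.
Arguments qsup {q}.
Arguments qten {q}.
Arguments qk {q}.

Definition qtop (V : quantale) : V := qsup (fun _ : V => True).
Definition qmeet {V : quantale} (u v : V) : V :=
  qsup (fun w => qle w u /\ qle w v).

Definition is_frame (V : quantale) : Prop :=
  forall (u : V) (S : V -> Prop),
    qmeet u (qsup S) = qsup (fun w => exists s, S s /\ w = qmeet u s).

Definition is_Vcat {V : quantale} (X : Type) (a : X -> X -> V) : Prop :=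
  (forall x, qle qk (a x x)) /\
  (forall x x' x'', qle (qten (a x x') (a x' x'')) (a x x'')).

Definition is_Vfunctor {V : quantale} (X Y : Type)
  (a : X -> X -> V) (b : Y -> Y -> V) (f : X -> Y) : Prop :=
  forall x x', qle (a x x') (b (f x) (f x')).

(** Groups (additive notation, not necessarily abelian). *)
Definition is_group (X : Type) (add : X -> X -> X) (zero : X) (opp : X -> X)
  : Prop :=
  (forall x y z, add x (add y z) = add (add x y) z) /\
  (forall x, add zero x = x) /\ (forall x, add x zero = x) /\
  (forall x, add (opp x) x = zero) /\ (forall x, add x (opp x) = zero).

Definition is_group_hom (X Y : Type) (addX : X -> X -> X) (addY : Y -> Y -> Y)
  (f : X -> Y) : Prop :=
  forall x x', f (addX x x') = addY (f x) (f x').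

Definition is_Vgroup {V : quantale} (X : Type) (a : X -> X -> V)
  (add : X -> X -> X) (zero : X) (opp : X -> X) : Prop :=
  is_Vcat a /\ is_group add zero opp /\
  (forall x1 x2 x1' x2',
      qle (qten (a x1 x2) (a x1' x2')) (a (add x1 x1') (add x2 x2'))).

Definition is_Vhom {V : quantale} (X Y : Type)
  (a : X -> X -> V) (addX : X -> X -> X) (b : Y -> Y -> V) (addY : Y -> Y -> Y)
  (f : X -> Y) : Prop :=
  is_group_hom addX addY f /\ is_Vfunctor a b f.

(** A group action of Y on X by automorphisms, i.e. a group homomorphism
    phi : Y -> Aut(X). *)
Definition is_aut (X : Type) (addX : X -> X -> X) (g : X -> X) : Prop :=
  is_group_hom addX addX g /\ (exists h : X -> X,
     (forall x, h (g x) = x) /\ (forall x, g (h x) = x)).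

Definition is_action (X Y : Type) (addX : X -> X -> X) (addY : Y -> Y -> Y)
  (phi : Y -> X -> X) : Prop :=
  (forall y, is_aut addX (phi y)) /\
  (forall y y' x, phi (addY y y') x = phi y (phi y' x)).

Definition sd_add (X Y : Type) (addX : X -> X -> X) (addY : Y -> Y -> Y)
  (phi : Y -> X -> X) (p q : X * Y) : X * Y :=
  (addX (fst p) (phi (snd p) (fst q)), addY (snd p) (snd q)).

Definition sd_zero (X Y : Type) (zeroX : X) (zeroY : Y) : X * Y :=
  (zeroX, zeroY).

Definition sd_opp (X Y : Type) (oppX : X -> X) (oppY : Y -> Y)
  (phi : Y -> X -> X) (p : X * Y) : X * Y :=
  (phi (oppY (snd p)) (oppX (fst p)), oppY (snd p)).

(** [k] is a kernel of [p] in VGrp (which is pointed, zero maps being the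
    constant maps to the neutral element): k is a V-homomorphism,
    p ∘ k = 0, and every V-homomorphism f into E with p ∘ f = 0 factors
    uniquely through k by a V-homomorphism. *)
Definition is_kernel_VGrp {V : quantale}
  (X : Type) (a : X -> X -> V) (addX : X -> X -> X)
  (E : Type) (c : E -> E -> V) (addE : E -> E -> E)
  (Y : Type) (zeroY : Y)
  (k : X -> E) (p : E -> Y) : Prop :=
  is_Vhom a addX c addE k /\
  (forall x, p (k x) = zeroY) /\
  (forall (Z : Type) (d : Z -> Z -> V) (addZ : Z -> Z -> Z) (zeroZ : Z)
          (oppZ : Z -> Z),
      is_Vgroup d addZ zeroZ oppZ ->
      forall f : Z -> E, is_Vhom d addZ c addE f ->
      (forall z, p (f z) = zeroY) ->
      exists! g : Z -> X, is_Vhom d addZ a addX g /\ (forall z, k (g z) = f z)).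

Set Implicit Arguments.
Unset Strict Implicit.

(* In X ⋊_φ Y the automorphism φ_y is conjugation (x,0) ↦ (0,y) + (x,0) + (0,-y).
   Conjugation is a V-functor of any V-group, because k ≤ c(p,p) lets one tensor
   c(z,z') with c(p,p) and c(q,q) on both sides.  Since ⟨1,0⟩ is a kernel in VGrp,
   c restricted to X × {0} is exactly a: the restricted structure makes X a V-group
   through which ⟨1,0⟩ must factor, and the factorisation is the identity. *)

Lemma qten_monor (V : quantale) (u v w : V) :
  qle v w -> qle (qten u v) (qten u w).
Proof.
  intro Hvw.
  set (S := fun s : V => s = v \/ s = w).
  assert (Hw : w = qsup S).
  { apply qle_antisym.
    - apply qsup_ub. now right.
    - apply qsup_least. intros s [-> | ->]; [exact Hvw | apply qle_refl]. }
  rewrite Hw, qten_sup. apply qsup_ub. now exists v; split; [left |].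
Qed.

Lemma qten_mono (V : quantale) (u u' v v' : V) :
  qle u u' -> qle v v' -> qle (qten u v) (qten u' v').
Proof.
  intros Hu Hv. apply qle_trans with (qten u v').
  - now apply qten_monor.
  - rewrite (qten_comm V u), (qten_comm V u'). now apply qten_monor.
Qed.

Lemma group_hom_zero (X Y : Type) (addX : X -> X -> X) (zeroX : X) (oppX : X -> X)
  (addY : Y -> Y -> Y) (zeroY : Y) (oppY : Y -> Y) (f : X -> Y) :
  is_group addX zeroX oppX -> is_group addY zeroY oppY ->
  is_group_hom addX addY f -> f zeroX = zeroY.
Proof.
  intros [_ [X0l _]] [Ya [Y0l [_ [YNl _]]]] Hf.
  assert (Hidem : f zeroX = addY (f zeroX) (f zeroX)) by now rewrite <- Hf, X0l.
  rewrite <- (Y0l (f zeroX)), <- (YNl (f zeroX)), <- Ya, <- Hidem.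
  now rewrite YNl.
Qed.

Lemma qle_qten_unitl (V : quantale) (u v : V) :
  qle qk u -> qle v (qten u v).
Proof.
  intro Hu. pose proof (qten_mono Hu (qle_refl V v)) as Hle.
  now rewrite qten_unit in Hle.
Qed.

Lemma Vgroup_conj_Vfunctor (V : quantale) (E : Type) (c : E -> E -> V)
  (add : E -> E -> E) (zero : E) (opp : E -> E) :
  is_Vgroup c add zero opp ->
  forall p q, is_Vfunctor c c (fun z => add (add p z) q).
Proof.
  intros [[Crefl _] [_ Cadd]] p q z z'.
  apply qle_trans with (qten (c (add p z) (add p z')) (c q q)); [| apply Cadd].
  rewrite qten_comm. apply qle_trans with (c (add p z) (add p z')).
  - apply qle_trans with (qten (c p p) (c z z')); [| apply Cadd].
    apply qle_qten_unitl, Crefl.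
  - apply qle_qten_unitl, Crefl.
Qed.

Lemma is_Vgroup_comap (V : quantale) (X E : Type) (c : E -> E -> V)
  (addE : E -> E -> E) (zeroE : E) (oppE : E -> E)
  (addX : X -> X -> X) (zeroX : X) (oppX : X -> X) (f : X -> E) :
  is_Vgroup c addE zeroE oppE -> is_group addX zeroX oppX ->
  is_group_hom addX addE f ->
  is_Vgroup (fun x x' => c (f x) (f x')) addX zeroX oppX.
Proof.
  intros [[Crefl Ctrans] [_ Cadd]] HX Hf.
  split; [split | split]; [intro; apply Crefl | intros; apply Ctrans | exact HX |].
  intros x1 x2 x1' x2'. rewrite !Hf. apply Cadd.
Qed.

Lemma kernel_VGrp_reflects (V : quantale)
  (X : Type) (a : X -> X -> V) (addX : X -> X -> X) (zeroX : X) (oppX : X -> X)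
  (E : Type) (c : E -> E -> V) (addE : E -> E -> E) (zeroE : E) (oppE : E -> E)
  (Y : Type) (zeroY : Y) (k : X -> E) (p : E -> Y) :
  is_group addX zeroX oppX -> is_Vgroup c addE zeroE oppE ->
  is_kernel_VGrp a addX c addE zeroY k p ->
  (forall x x', k x = k x' -> x = x') ->
  is_Vfunctor (fun x x' => c (k x) (k x')) a (fun x => x).
Proof.
  intros HX Hc [[Hkhom _] [Hpk Huniv]] Hkinj.
  destruct (Huniv X _ addX zeroX oppX (is_Vgroup_comap Hc HX Hkhom) k
              (conj Hkhom (fun x x' => qle_refl V _)) Hpk)
    as [g [[[_ Hg] Hkg] _]].
  assert (Hgid : forall x, g x = x) by (intro; apply Hkinj, Hkg).
  intros x x'. pose proof (Hg x x') as Hgxx'. now rewrite !Hgid in Hgxx'.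
Qed.

Lemma sd_conj_inl (X Y : Type) (addX : X -> X -> X) (zeroX : X) (oppX : X -> X)
  (addY : Y -> Y -> Y) (zeroY : Y) (oppY : Y -> Y) (phi : Y -> X -> X) :
  is_group addX zeroX oppX -> is_group addY zeroY oppY ->
  is_action addX addY phi ->
  forall y x, sd_add addX addY phi (sd_add addX addY phi (zeroX, y) (x, zeroY))
                (zeroX, oppY y) = (phi y x, zeroY).
Proof.
  intros HX HY Hphi y x.
  assert (Hphi0 : phi y zeroX = zeroX)
    by exact (group_hom_zero HX HX (proj1 (proj1 Hphi y))).
  destruct HX as [_ [X0l [X0r _]]]. destruct HY as [_ [_ [Y0r [_ YNr]]]].
  unfold sd_add; simpl. now rewrite Y0r, Hphi0, X0l, X0r, YNr.
Qed.

Theorem lemma7p1 (V : quantale) (Hframe : is_frame V) (Hk : qk = qtop V)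
  (X : Type) (a : X -> X -> V) (addX : X -> X -> X) (zeroX : X) (oppX : X -> X)
  (Y : Type) (b : Y -> Y -> V) (addY : Y -> Y -> Y) (zeroY : Y) (oppY : Y -> Y)
  (HX : is_Vgroup a addX zeroX oppX)
  (HY : is_Vgroup b addY zeroY oppY)
  (phi : Y -> X -> X) (Hphi : is_action addX addY phi)
  (c : X * Y -> X * Y -> V)
  (Hc : is_Vgroup c (sd_add addX addY phi) (sd_zero zeroX zeroY)
                    (sd_opp oppX oppY phi))
  (Hpi2 : is_Vhom c (sd_add addX addY phi) b addY (@snd X Y))
  (Hin2 : is_Vhom b addY c (sd_add addX addY phi) (fun y => (zeroX, y)))
  (Hsplit : forall y : Y, @snd X Y (zeroX, y) = y)
  (Hker : is_kernel_VGrp a addX c (sd_add addX addY phi) zeroY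
            (fun x => (x, zeroY)) (@snd X Y)) :
  forall y : Y, is_Vfunctor a a (phi y).
Proof.
  intros y x x'.
  destruct HX as [_ [HXgrp _]]. destruct HY as [_ [HYgrp _]].
  pose proof (proj2 (proj1 Hker)) as Hinl.
  pose proof (kernel_VGrp_reflects HXgrp Hc Hker
                (fun x1 x2 (E : (x1, zeroY) = (x2, zeroY)) => f_equal fst E))
    as Hrestr.
  apply qle_trans with (c (phi y x, zeroY) (phi y x', zeroY)); [| apply Hrestr].
  rewrite <- !(sd_conj_inl HXgrp HYgrp Hphi y).
  apply qle_trans with (c (x, zeroY) (x', zeroY)); [apply Hinl |].
  apply (Vgroup_conj_Vfunctor Hc).
Qed.
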